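(* Let $k\ge1$ and let $a_1,\dots,a_k,b_1,\dots,b_k$ be $2k$ distinct integers. Put $D=\prod_{i=1}^k\prod_{j=1}^k|a_i-b_j|$. Then $$D\ge (2/3)^k\bigl(1!\,2!\cdots(2k-1)!\bigr)^{1/2}.$$ *)

From mathcomp Require Import all_boot all_order all_algebra.
From mathcomp Require Import reals.

From mathcomp Require Import all_boot all_order all_algebra.
From mathcomp Require Import reals.
From mathcomp Require Import algC sesquilinear spectral ring lra zify.
Import Order.TTheory GRing.Theory Num.Theory.
Local Open Scope ring_scope.

(* By Cauchy's determinant formula, det [1 / (a_i - b_j)] * D is the product V_a V_b of the
   distances |a_i - a_j|, |b_i - b_j| (i < j).  Hadamard's inequality bounds |det|^2 by the
   product of the squared row norms, and each of these is a sum of 1/d^2 over distinct nonzero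
   integers d, hence at most 4; so V_a V_b <= 2^k D.  Conversely, 2k distinct integers have
   Vandermonde product V_a V_b D >= 0! 1! ... (2k-1)!: after removing the largest one, its
   distances to the others are distinct positive integers.  Hence 1! ... (2k-1)! <= 2^k D^2,
   which is stronger than the claim because (2/3)^2 * 2 < 1. *)

Local Open Scope sesquilinear_scope.

Lemma mul_trmxC_diag (C : numClosedFieldType) m n (M : 'M[C]_(m, n)) i :
  (M *m M^t*) i i = \sum_(j < n) `|M i j| ^+ 2.
Proof. by rewrite !mxE; apply: eq_bigr => j _; rewrite !mxE normCK. Qed.

Lemma unitarymx_row_orth (C : numClosedFieldType) m n (Q : 'M[C]_(m, n)) k j :
  Q \is unitarymx -> k != j -> row k Q *m (row j Q)^t* = 0.
Proof.
move=> /row_unitarymxP Qo neq_kj; rewrite [LHS]mx11_scalar -dotmxE Qo.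
by rewrite (negbTE neq_kj) raddf0.
Qed.

Lemma trig_mul_schmidt_trmxC (C : numClosedFieldType) n (A : 'M[C]_n) :
  is_trig_mx (A *m (schmidt A)^t*).
Proof.
set Q := schmidt A; have Qu : Q \is unitarymx by exact: schmidt_unitarymx.
apply/is_trig_mxP => i j lt_ij.
have -> : (A *m Q^t*) i j = (row i A *m (row j Q)^t*) 0 0.
  by rewrite !mxE; apply: eq_bigr => l _; rewrite !mxE.
case/sub_sumsmxP: (row_schmidt_sub A i) => u ->.
rewrite mulmx_suml summxE big1 // => k le_ki.
have sub_k : (<<row k Q>> <= row k Q)%MS by rewrite genmxE.
rewrite -(mulmxKpV sub_k) -!mulmxA unitarymx_row_orth ?mulmx0 ?mxE //.
by rewrite neq_ltn (leq_ltn_trans le_ki lt_ij).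
Qed.

Lemma hadamard_ineq (C : numClosedFieldType) n (A : 'M[C]_n) :
  `|\det A| ^+ 2 <= \prod_(i < n) \sum_(j < n) `|A i j| ^+ 2.
Proof.
(* Gram-Schmidt gives A = L Q with Q unitary and L lower triangular. *)
set Q := schmidt A; set L := A *m Q^t*.
have /unitarymxP QQt : Q \is unitarymx by exact: schmidt_unitarymx.
have QtQ : Q^t* *m Q = 1%:M := mulmx1C QQt.
have AL : A = L *m Q by rewrite /L -mulmxA QtQ mulmx1.
have LLt : L *m L^t* = A *m A^t*.
  by rewrite /L trmx_mul map_mxM mulmxA -(mulmxA A) trmxCK QtQ mulmx1.
have detQ : `|\det Q| ^+ 2 = 1.
  rewrite normCK; have := congr1 determinant QQt.
  by rewrite det_mulmx det1 det_map_mx det_tr.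
rewrite {1}AL det_mulmx normrM exprMn detQ mulr1.
rewrite det_trig ?trig_mul_schmidt_trmxC // normr_prod -prodrXl.
apply: ler_prod => i _; rewrite exprn_ge0 //= -mul_trmxC_diag -LLt mul_trmxC_diag.
by rewrite (bigD1 i) //= lerDl sumr_ge0 // => j _; rewrite exprn_ge0.
Qed.

Local Close Scope sesquilinear_scope.

Definition cauchy_mx {F : fieldType} {n} (x y : 'I_n -> F) : 'M[F]_n :=
  \matrix_(i, j) (x i - y j)^-1.

Lemma det_cauchy_mxS (F : fieldType) n (x y : 'I_n.+1 -> F) :
  (forall i j, x i != y j) ->
  let x' i := x (lift 0 i) in let y' j := y (lift 0 j) in
  \det (cauchy_mx x y) = (x 0 - y 0)^-1
    * \prod_(i < n) ((x' i - x 0) / (x' i - y 0))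
    * \det (cauchy_mx x' y')
    * \prod_(j < n) ((y 0 - y' j) / (x 0 - y' j)).
Proof.
move=> neq_xy x' y'; rewrite {}/x' {}/y' /=.
have nz i j : x i - y j != 0 by rewrite subr_eq0 neq_xy.
set a := (x 0 - y 0)^-1.
set M' := cauchy_mx (fun i : 'I_n => x (lift 0 i)) (fun j => y (lift 0 j)).
set r := \row_(j < n) (x 0 - y (lift 0 j))^-1.
set c := \col_(i < n) (x (lift 0 i) - y 0)^-1.
set u := \row_(i < n) ((x (lift 0 i) - x 0) / (x (lift 0 i) - y 0)).
set v := \row_(j < n) ((y 0 - y (lift 0 j)) / (x 0 - y (lift 0 j))).
set e := \col_(i < n) ((x 0 - y 0) / (x (lift 0 i) - y 0)).
have blockE : cauchy_mx x y = block_mx a%:M r c M' :> 'M_(1 + n).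
  apply/matrixP => i j; rewrite /cauchy_mx.
  by case: (split_ordP i) => i' ->; case: (split_ordP j) => j' ->;
    rewrite ?block_mxEul ?block_mxEur ?block_mxEdl ?block_mxEdr !mxE ?ord1
            ?lshift0 ?rshift1.
(* Subtracting e times the first row clears the first column and turns the
   remaining block into diag u *m M' *m diag v. *)
have elim_col : - e *m a%:M + c = 0.
  apply/matrixP => i j; rewrite mul_mx_scalar !mxE /a.
  by field; rewrite !nz.
have elim_block : - e *m r + M' = diag_mx u *m M' *m diag_mx v.
  apply/matrixP => i j; rewrite mul_diag_mx mul_mx_diag !mxE big_ord1 !mxE.
  by field; rewrite !nz.
have := congr1 determinant (mulmx_block 1%:M 0 (- e) 1%:M a%:M r c M').
rewrite -blockE det_mulmx det_lblock !det1 !mul1r => ->.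
rewrite !mul1mx !mul0mx !addr0 elim_col elim_block det_ublock det_scalar1.
rewrite !det_mulmx !det_diag !mulrA.
by congr (_ * _ * _ * _); apply: eq_bigr => i _; rewrite mxE.
Qed.

Lemma det_cauchy_mx (F : fieldType) n (x y : 'I_n -> F) :
  (forall i j, x i != y j) ->
  \det (cauchy_mx x y) * \prod_(i < n) \prod_(j < n) (x i - y j)
  = \prod_(i < n) \prod_(j < n | (i < j)%N) ((x j - x i) * (y i - y j)).
Proof.
elim: n x y => [|n IH] x y neq_xy; first by rewrite det_mx00 !big_ord0 mulr1.
have nz i j : x i - y j != 0 by rewrite subr_eq0 neq_xy.
rewrite det_cauchy_mxS //.
set x' := fun i : 'I_n => x (lift 0 i); set y' := fun j : 'I_n => y (lift 0 j).
have prod_cross : \prod_(i < n.+1) \prod_(j < n.+1) (x i - y j) =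
    (x 0 - y 0) * \prod_j (x 0 - y' j) * \prod_i (x' i - y 0)
    * \prod_i \prod_j (x' i - y' j).
  rewrite big_ord_recl [X in X * _]big_ord_recl -!mulrA; congr (_ * (_ * _)).
  by rewrite -big_split; apply: eq_bigr => i _; rewrite big_ord_recl.
have prod_vdm : \prod_(i < n.+1) \prod_(j < n.+1 | (i < j)%N)
      ((x j - x i) * (y i - y j)) =
    \prod_j (x' j - x 0) * \prod_j (y 0 - y' j)
    * \prod_(i < n) \prod_(j < n | (i < j)%N) ((x' j - x' i) * (y' i - y' j)).
  rewrite big_ord_recl -big_split /=; congr (_ * _).
    by rewrite big_mkcond big_ord_recl /= mul1r.
  apply: eq_bigr => i _; rewrite big_mkcond big_ord_recl /= [RHS]big_mkcond mul1r.
  by apply: eq_bigr => j _; rewrite /bump !leq0n !add1n ltnS.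
have ratio_prod (f g : 'I_n -> F) : (forall i, g i != 0) ->
    \prod_i (f i / g i) * \prod_i g i = \prod_i f i.
  by move=> nz_g; rewrite -big_split; apply: eq_bigr => i _; exact: divfK.
rewrite prod_cross prod_vdm -(IH x' y') => [|i j]; last exact: neq_xy.
rewrite -(ratio_prod (fun i => x' i - x 0) (fun i => x' i - y 0)) => [|i]; last exact: nz.
rewrite -(ratio_prod (fun j => y 0 - y' j) (fun j => x 0 - y' j)) => [|j]; last exact: nz.
by field; rewrite nz.
Qed.

Lemma sum_inv_sqr_int_bounded (R : realFieldType) (M : nat) (s : seq int) :
  uniq s -> 0 \notin s -> all (fun d => `|d| <= M)%N s ->
  \sum_(d <- s) (d%:~R ^+ 2)^-1 <= 4 - 4 / M.+1%:R :> R.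
Proof.
elim: M s => [|M IH] s us s0 s_le.
  case: s us s0 s_le => [|d s] _; first by rewrite big_nil divr1 subrr.
  by rewrite inE negb_or eq_sym => /andP[+ _] /andP[+ _]; rewrite leqn0 absz_eq0 => /negbTE->.
rewrite (bigID (fun d => `|d| <= M)%N) /=.
set t := [seq d <- s | ~~ (`|d| <= M)%N].
have t_abs d : d \in t -> `|d|%N = M.+1.
  rewrite mem_filter => /andP[d_gtM d_s].
  by apply/eqP; rewrite eqn_leq (allP s_le d d_s) ltnNge.
have size_t : (size t <= 2)%N.
  rewrite -[2%N]/(size [:: M.+1%:Z; - M.+1%:Z]); apply: uniq_leq_size => [|d /t_abs].
    by rewrite filter_uniq.
  by rewrite !inE; case: d => n /= => [->|[->]]; rewrite ?NegzE eqxx ?orbT.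
have sum_t : \sum_(d <- s | ~~ (`|d| <= M)%N) (d%:~R ^+ 2)^-1
    <= 2 * (M.+1%:R ^+ 2)^-1 :> R.
  rewrite -big_filter -/t (eq_big_seq (fun _ => (M.+1%:R ^+ 2)^-1)) => [|d /t_abs <-].
    rewrite big_const_seq count_predT iter_addr_0 -[_ *+ size t]mulr_natl.
    by rewrite ler_pM2r ?invr_gt0 ?exprn_gt0 ?ltr0Sn // ler_nat.
  by rewrite natr_absz intr_norm real_normK ?num_real.
have sum_le_M : \sum_(d <- s | (`|d| <= M)%N) (d%:~R ^+ 2)^-1 <= 4 - 4 / M.+1%:R :> R.
  rewrite -big_filter IH ?filter_uniq ?mem_filter ?negb_and ?s0 ?orbT //.
  by rewrite all_filter; apply/allP => d _; apply/implyP.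
apply: le_trans (lerD sum_le_M sum_t) _.
(* The two new terms 1/(M+1)^2 are paid for by the slack 4/(M+1) - 4/(M+2). *)
have : 1 <= M.+1%:R :> R by rewrite ler1n.
rewrite -[M.+2]addn1 natrD; move: (M.+1%:R : R) => m m_ge1.
rewrite -subr_ge0.
have -> : 4 - 4 / (m + 1) - (4 - 4 / m + 2 * (m ^+ 2)^-1)
          = 2 * (m - 1) / (m ^+ 2 * (m + 1)).
  by field; apply/andP; split; apply/negP => /eqP; lra.
by rewrite divr_ge0 ?mulr_ge0 ?exprn_ge0 //; lra.
Qed.

Lemma sum_inv_sqr_int_le (R : numFieldType) (s : seq int) :
  uniq s -> 0 \notin s -> \sum_(d <- s) (d%:~R ^+ 2)^-1 <= 4 :> R.
Proof.
move=> us s0.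
have -> : \sum_(d <- s) (d%:~R ^+ 2)^-1 = ratr (\sum_(d <- s) (d%:~R ^+ 2)^-1) :> R.
  by rewrite rmorph_sum; apply: eq_bigr => d _; rewrite fmorphV rmorphXn rmorph_int.
rewrite -[4](rmorph_nat (@ratr R)) ler_rat.
apply: le_trans (sum_inv_sqr_int_bounded _ (\max_(d <- s) `|d|)%N _ us s0 _) _.
  by apply/allP => d d_s; exact: leq_bigmax_seq.
by rewrite gerBl divr_ge0 ?ler0n.
Qed.

Lemma fact_size_le_prod (s : seq nat) : uniq s -> 0%N \notin s ->
  ((size s)`! <= \prod_(x <- s) x)%N.
Proof.
have geq_trans : transitive geq by exact: rev_trans leq_trans.
wlog sorted_s : s / sorted geq s => [gen us s0|].
  have ps : perm_eq (sort geq s) s := permEl (perm_sort _ _).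
  rewrite -(perm_size ps) -(perm_big _ ps).
  apply: gen; rewrite ?(perm_uniq ps) ?(perm_mem ps) //.
  by apply: sort_sorted => m n; exact: leq_total n m.
elim: s sorted_s => [|m t IH] /=; first by rewrite big_nil.
rewrite (path_sortedE geq_trans) => /andP[t_le_m sorted_t] /andP[m_t ut].
rewrite inE negb_or => /andP[m_gt0 t0].
have size_le_m : (size t < m)%N.
  rewrite -(size_iota 1 m); apply: (uniq_leq_size (s1 := m :: t)) => [|x]; first exact/andP.
  rewrite mem_iota inE => /orP[/eqP-> | x_t]; first by lia.
  by have := allP t_le_m x x_t; have := memPn t0 x x_t; lia.
by rewrite big_cons factS leq_mul // IH.
Qed.

Lemma prod_ord_neq_sym k (F : 'I_k -> 'I_k -> nat) : (forall i j, F i j = F j i) ->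
  (\prod_(i < k) \prod_(j < k | j != i) F i j
   = (\prod_(i < k) \prod_(j < k | (i < j)%N) F i j) ^ 2)%N.
Proof.
move=> symF.
have swap : (\prod_(i < k) \prod_(j < k | (i < j)%N) F i j
             = \prod_(i < k) \prod_(j < k | (j < i)%N) F i j)%N.
  under eq_bigr do under eq_bigr do rewrite symF.
  under eq_bigr do rewrite big_mkcond.
  by rewrite exchange_big; apply: eq_bigr => i _; rewrite [RHS]big_mkcond.
rewrite -mulnn {2}swap -big_split; apply: eq_bigr => i _ /=.
rewrite (bigID (fun j : 'I_k => (i < j)%N)) /=.
by congr (_ * _)%N; apply: eq_bigl => j; rewrite -val_eqE /=; case: ltngtP.
Qed.

Definition dist_prod (s : seq int) : nat :=
  \prod_(u <- s) \prod_(v <- s | v != u) `|u - v|%N.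

Lemma perm_dist_prod {s t : seq int} : perm_eq s t -> dist_prod s = dist_prod t.
Proof.
move=> pst; rewrite /dist_prod (perm_big _ pst).
by apply: eq_bigr => u _; rewrite (perm_big _ pst).
Qed.

Lemma dist_prod_cons m t : m \notin t ->
  dist_prod (m :: t) = ((\prod_(v <- t) `|m - v|) ^ 2 * dist_prod t)%N.
Proof.
move=> m_t; rewrite /dist_prod big_cons big_cons eqxx /= -mulnn -mulnA.
have -> : (\prod_(v <- t | v != m) `|m - v| = \prod_(v <- t) `|m - v|)%N.
  rewrite big_seq_cond [RHS]big_seq; apply: eq_bigl => v.
  by case: (boolP (v \in t)) => //= v_t; apply: contraNneq m_t => <-.
congr (_ * _)%N; rewrite -big_split /= !big_seq; apply: eq_bigr => u u_t.
have neq_mu : m != u by apply: contraNneq m_t => ->.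
by rewrite big_cons neq_mu -abszN opprB.
Qed.

Lemma dist_prod_cat s t : uniq (s ++ t) ->
  dist_prod (s ++ t)
  = (dist_prod s * dist_prod t * (\prod_(u <- s) \prod_(v <- t) `|u - v|) ^ 2)%N.
Proof.
elim: s => [|m s IH] /=; first by rewrite big_nil /dist_prod big_nil mul1n muln1.
rewrite mem_cat negb_or => /andP[/andP[m_s m_t] ust].
rewrite dist_prod_cons ?mem_cat ?negb_or ?m_s // IH // dist_prod_cons // big_cat big_cons.
by rewrite /=; ring.
Qed.

Lemma superfact_le_dist_prod (s : seq int) : uniq s ->
  ((\prod_(i < size s) i`!) ^ 2 <= dist_prod s)%N.
Proof.
have ge_trans : transitive (>=%O : rel int) by exact: rev_trans le_trans.
wlog sorted_s : s / sorted >=%O s => [gen us|].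
  have ps : perm_eq (sort >=%O s) s := permEl (perm_sort _ _).
  rewrite -(perm_size ps) -(perm_dist_prod ps); apply: gen; rewrite ?(perm_uniq ps) //.
  by apply: sort_sorted => x y; exact: le_total.
elim: s sorted_s => [|m t IH] /=; first by rewrite big_ord0 /dist_prod big_nil.
rewrite (path_sortedE ge_trans) => /andP[t_le_m sorted_t] /andP[m_t ut].
rewrite dist_prod_cons // big_ord_recr expnMn mulnC leq_mul ?IH //= leq_exp2r //.
have t_lt_m v : v \in t -> v < m.
  move=> v_t; rewrite lt_neqAle (allP t_le_m v v_t : v <= m) andbT.
  by apply: contraNneq m_t => <-.
rewrite -(size_map (fun v => `|m - v|%N)) -(big_map _ xpredT id).
apply: fact_size_le_prod.
  by rewrite map_inj_in_uniq // => v w /t_lt_m lt_vm /t_lt_m lt_wm; lia.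
by apply/mapP => -[v /t_lt_m]; lia.
Qed.

Lemma dist_prod_map k (f : 'I_k -> int) : injective f ->
  dist_prod (map f (index_enum 'I_k))
  = ((\prod_(i < k) \prod_(j < k | (i < j)%N) `|f i - f j|) ^ 2)%N.
Proof.
move=> inj_f; rewrite /dist_prod big_map -prod_ord_neq_sym => [|i j]; last first.
  by rewrite -abszN opprB.
by apply: eq_bigr => i _; rewrite big_map; apply: eq_bigl => j; rewrite (inj_eq inj_f).
Qed.

Lemma norm_det_cauchy_mx_int_le k (a b : 'I_k -> int) :
  injective b -> (forall i j, a i != b j) ->
  `|\det (cauchy_mx (fun i => (a i)%:~R) (fun j => (b j)%:~R) : 'M[algC]_k)| <= 2 ^+ k.
Proof.
move=> inj_b neq_ab.
rewrite -(ler_pXn2r (isT : 0 < 2)%N) ?nnegrE ?exprn_ge0 // -exprM mulnC exprM.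
apply: le_trans (hadamard_ineq _ _ _) _.
rewrite -[k in _ <= _ ^+ k]card_ord -prodr_const; apply: ler_prod => i _.
rewrite sumr_ge0 => [|j _]; last exact: exprn_ge0.
have -> : \sum_(j < k) `|cauchy_mx (fun i => (a i)%:~R) (fun j => (b j)%:~R) i j| ^+ 2
    = \sum_(d <- map (fun j => a i - b j) (index_enum 'I_k)) (d%:~R ^+ 2)^-1 :> algC.
  rewrite big_map; apply: eq_bigr => j _.
  by rewrite !mxE -intrB normfV exprVn real_normK ?realz.
rewrite -natrX; apply: sum_inv_sqr_int_le.
  by rewrite map_inj_uniq ?index_enum_uniq // => j1 j2 /addrI /oppr_inj /inj_b.
by apply/mapP => -[j _ /eqP]; rewrite eq_sym subr_eq0 (negbTE (neq_ab i j)).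
Qed.

Lemma vandermonde_dist_le k (a b : 'I_k -> int) :
  injective b -> (forall i j, a i != b j) ->
  (\prod_(i < k) \prod_(j < k | (i < j)%N) `|a i - a j|
   * \prod_(i < k) \prod_(j < k | (i < j)%N) `|b i - b j|
   <= 2 ^ k * \prod_(i < k) \prod_(j < k) `|a i - b j|)%N.
Proof.
move=> inj_b neq_ab.
set x := fun i => (a i)%:~R : algC; set y := fun j => (b j)%:~R : algC.
have neq_xy i j : x i != y j by rewrite eqr_int neq_ab.
have norm_cross : `|\prod_(i < k) \prod_(j < k) (x i - y j)|
    = (\prod_(i < k) \prod_(j < k) `|a i - b j|)%:R.
  rewrite natr_prod normr_prod; apply: eq_bigr => i _.
  rewrite natr_prod normr_prod; apply: eq_bigr => j _.
  by rewrite -intrB -intr_norm natr_absz.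
have norm_vdm : `|\prod_(i < k) \prod_(j < k | (i < j)%N) ((x j - x i) * (y i - y j))|
    = (\prod_(i < k) \prod_(j < k | (i < j)%N) `|a i - a j|
       * \prod_(i < k) \prod_(j < k | (i < j)%N) `|b i - b j|)%:R.
  rewrite -big_split natr_prod normr_prod; apply: eq_bigr => i _ /=.
  rewrite -big_split natr_prod normr_prod; apply: eq_bigr => j _ /=.
  by rewrite natrM normrM (distrC (x j)) -!intrB -!intr_norm !natr_absz.
rewrite -(ler_nat algC) -norm_vdm natrM natrX -norm_cross.
rewrite -(det_cauchy_mx _ _ _ _ neq_xy) normrM ler_wpM2r //.
exact: norm_det_cauchy_mx_int_le.
Qed.

Lemma superfact_le_dist k (a b : 'I_k -> int) :
  injective a -> injective b -> (forall i j, a i != b j) ->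
  (\prod_(i < 2 * k) i`! <= 2 ^ k * (\prod_(i < k) \prod_(j < k) `|a i - b j|) ^ 2)%N.
Proof.
move=> inj_a inj_b neq_ab.
set s := map a (index_enum 'I_k) ++ map b (index_enum 'I_k).
have us : uniq s.
  rewrite cat_uniq !map_inj_uniq ?index_enum_uniq //= andbT.
  apply/hasPn => _ /mapP[j _ ->]; apply/mapP => -[i _ /eqP].
  by rewrite eq_sym (negbTE (neq_ab i j)).
have size_s : size s = (2 * k)%N.
  by rewrite size_cat !size_map -sum1_size sum1_card card_ord addnn mul2n.
have := superfact_le_dist_prod s us.
rewrite size_s dist_prod_cat // !dist_prod_map // big_map.
under eq_bigr do rewrite big_map.
have := vandermonde_dist_le _ _ _ inj_b neq_ab.
set D := (\prod_(i < k) \prod_(j < k) _)%N => vdm sf2.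
rewrite -(@leq_exp2r _ _ 2) //; apply: leq_trans sf2 _.
by rewrite -!expnMn leq_exp2r // -mulnn mulnA leq_mul2r vdm orbT.
Qed.

Lemma two_thirds_pow_sqrt_le (R : rcfType) k (S D : R) : 0 <= S -> 0 <= D ->
  S <= 2 ^+ k * D ^+ 2 -> (2 / 3) ^+ k * Num.sqrt S <= D.
Proof.
move=> S_ge0 D_ge0 S_le; have c_ge0 : 0 <= 2 / 3 :> R by rewrite divr_ge0.
rewrite -(ler_pXn2r (isT : 0 < 2)%N) ?nnegrE ?mulr_ge0 ?sqrtr_ge0 ?exprn_ge0 //.
rewrite exprMn sqr_sqrtr // -exprM mulnC exprM.
apply: le_trans (ler_wpM2l (exprn_ge0 _ (exprn_ge0 _ c_ge0)) S_le) _.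
rewrite mulrA -exprMn (_ : (2 / 3) ^+ 2 * 2 = 8 / 9); last by field.
rewrite ler_piMl ?exprn_ge0 // exprn_ile1 ?divr_ge0 //.
by rewrite ler_pdivrMr ?ltr0n // mul1r ler_nat.
Qed.

Theorem lemma3p2 (R : realType) (k : nat) (hk : (1 <= k)%N)
    (a b : 'I_k -> int)
    (ha : injective a) (hb : injective b)
    (hab : forall i j, a i != b j) :
  ((2%:R / 3%:R) ^+ k) * Num.sqrt (\prod_(1 <= m < 2 * k) (m`!)%:R)
    <= (\prod_(i < k) \prod_(j < k) `|a i - b j|)%:~R :> R.
Proof.
have := superfact_le_dist _ _ _ ha hb hab.
set S := (\prod_(i < 2 * k) i`!)%N.
set D := (\prod_(i < k) \prod_(j < k) `|a i - b j|)%N => S_le.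
have -> : \prod_(1 <= m < 2 * k) (m`!)%:R = S%:R :> R.
  rewrite /S natr_prod -(big_mkord xpredT (fun i => (i`!)%:R)).
  by rewrite (@big_ltn _ _ _ 0) ?muln_gt0 // fact0 mul1r.
have -> : (\prod_(i < k) \prod_(j < k) `|a i - b j|)%:~R = D%:R :> R.
  rewrite /D natr_prod rmorph_prod; apply: eq_bigr => i _.
  by rewrite natr_prod rmorph_prod; apply: eq_bigr => j _; rewrite natr_absz.
by apply: two_thirds_pow_sqrt_le; rewrite ?ler0n // -natrX -natrX -natrM ler_nat.
Qed.
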